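(* Fix a string $x\in\{0,1\}^*$. Then $\mu_x(\varepsilon)=\rho(x)$, where $\varepsilon$ is the empty string, and for all nonempty strings $w=xy\in\{0,1\}^*$, \[ \mu_x(y1)=\mu_x(y)+1,\qquad \mu_x(y0)=\begin{cases}0&\text{if }\rho(xy)>\mu_x(y)=0,\\ \mu_x(y)-1&\text{otherwise.}\end{cases} \] Additionally, there exists a closed fork $F\vdash xy$ such that $\rho(F)=\rho(xy)$ and $\mu_x(F)=\mu_x(y)$.
   Context: Characteristic strings and forks. A characteristic string is $w=w_1\dots w_n\in\{0,1\}^n$; index $i$ is honest if $w_i=0$ and adversarial if $w_i=1$. A fork for $w$ is a rooted tree with edges directed away from the root $r$ and labeling $\ell:V\to\{0,\dots,n\}$ with (F1) $\ell(r)=0$; (F2) labels strictly increasing along directed paths; (F3) each honest index labels exactly one vertex; (F4) for honest $i<j$ the vertex labeled $i$ has strictly smaller depth than the vertex labeled $j$. Write $F\vdash w$. A vertex is honest if it is the root or labeled by an honest index. A tine is a directed path from the root; its length is its number of edges, $\ell(t)$ the label of its last vertex. A fork is closed if every leaf is honest (the single-vertex fork is closed); a closed fork has a unique longest tine $\hat t$. For closed $F\vdash w$ and tine $t$: $\mathrm{gap}(t)=\mathrm{length}(\hat t)-\mathrm{length}(t)$, $\mathrm{reserve}(t)=|\{i:w_i=1,\ i>\ell(t)\}|$, $\mathrm{reach}(t)=\mathrm{reserve}(t)-\mathrm{gap}(t)$; $\rho(F)=\max_t\mathrm{reach}(t)$ and $\rho(w)=\max\{\rho(F):F\vdash w\text{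 closed}\}$. For $w=xy$, tines $t_1,t_2$ are disjoint over $y$ if they share no edge terminating at a vertex whose label is an index of $y$ (label $>|x|$); a tine may be paired with itself. $\mu_x(F)=\max\min\{\mathrm{reach}(t_1),\mathrm{reach}(t_2)\}$ over pairs disjoint over $y$, and $\mu_x(y)=\max\{\mu_x(F):F\vdash xy\text{ closed}\}$. *)

From Stdlib Require Import ClassicalEpsilon.
From mathcomp Require Import all_boot all_order all_algebra.
Set Implicit Arguments. Unset Strict Implicit. Unset Printing Implicit Defensive.
Import Order.TTheory GRing.Theory Num.Theory.

(* Characteristic strings: seq bool, with true = 1 (adversarial),
   false = 0 (honest).  Index i (1 <= i <= size w) refers to nth false w i.-1. *)
Definition charstring := seq bool.

Definition adv_idx (w : charstring) (i : nat) : bool :=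
  (0 < i <= size w) && nth false w i.-1.
Definition honest_idx (w : charstring) (i : nat) : bool :=
  (0 < i <= size w) && ~~ nth false w i.-1.

(* Maximum of a set of integers (the element r of P with s <= r for all s in P);
   chosen by classical description; all uses below are of nonempty sets that
   are bounded above, so the maximum exists. *)
Definition imax (P : int -> Prop) : int :=
  epsilon (inhabits 0%Z) (fun r => P r /\ forall s, P s -> (s <= r)%R).

(* Vertices are 0..fsize,
   the root is 0, fpar v is the parent of the vertex v (v >= 1), and flab is
   the labelling.  Every finite rooted tree can be numbered so that parents
   precede children (fpar v < v), which is required in [is_fork]. *)
Record fork := Fork { fsize : nat; fpar : nat -> nat; flab : nat -> nat }.

Definition vertices (F : fork) : seq nat := iota 0 (fsize F).+1.

(* the vertex list of the tine (root path) ending at v, from v to the root *)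
Fixpoint tine_aux (F : fork) (fuel v : nat) : seq nat :=
  match fuel with
  | 0 => [:: v]
  | f.+1 => if v == 0 then [:: 0] else v :: tine_aux F f (fpar F v)
  end.
Definition tine (F : fork) (v : nat) : seq nat := tine_aux F v v.

Definition depth (F : fork) (v : nat) : nat := (size (tine F v)).-1.

Definition honest_vertex (w : charstring) (F : fork) (v : nat) : bool :=
  (v == 0) || honest_idx w (flab F v).

Definition is_fork (w : charstring) (F : fork) : Prop :=
  (forall v, 0 < v <= fsize F -> fpar F v < v) /\
  [/\       flab F 0 = 0,
      (forall v, 0 < v <= fsize F -> flab F (fpar F v) < flab F v),
      (forall v, v <= fsize F -> flab F v <= size w),
      (forall i, honest_idx w i ->
          count (fun v => flab F v == i) (vertices F) = 1)
    & (forall u v, u <= fsize F -> v <= fsize F ->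
          honest_idx w (flab F u) -> honest_idx w (flab F v) ->
          flab F u < flab F v -> depth F u < depth F v)
  ].

Definition is_leaf (F : fork) (v : nat) : bool :=
  ~~ has (fun u => (0 < u) && (fpar F u == v)) (vertices F).

Definition closed_fork (w : charstring) (F : fork) : Prop :=
  is_fork w F /\
  (forall v, v <= fsize F -> is_leaf F v -> honest_vertex w F v).

Definition height (F : fork) : nat := \max_(v <- vertices F) depth F v.

Definition gap (F : fork) (v : nat) : nat := height F - depth F v.
Definition reserve (w : charstring) (F : fork) (v : nat) : nat :=
  count (fun i => adv_idx w i && (flab F v < i)) (iota 1 (size w)).
Definition reach (w : charstring) (F : fork) (v : nat) : int :=
  ((reserve w F v)%:Z - (gap F v)%:Z)%R.

Definition rho_fork (w : charstring) (F : fork) : int :=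
  imax (fun r => exists2 v, v <= fsize F & r = reach w F v).

Definition rho (w : charstring) : int :=
  imax (fun r => exists2 F, closed_fork w F & r = rho_fork w F).

(* tines ending at v1, v2 are disjoint over y (w = x y, k = |x|):
   they share no edge terminating at a vertex with label > k. *)
Definition disjoint_over (k : nat) (F : fork) (v1 v2 : nat) : bool :=
  ~~ has (fun u => (u != 0) && (k < flab F u) && (u \in tine F v2)) (tine F v1).

Definition mu_fork (x y : charstring) (F : fork) : int :=
  imax (fun r => exists v1 v2, [/\ v1 <= fsize F, v2 <= fsize F,
          disjoint_over (size x) F v1 v2 &
          r = Order.min (reach (x ++ y) F v1) (reach (x ++ y) F v2)]).

Definition mu (x y : charstring) : int :=
  imax (fun r => exists2 F, closed_fork (x ++ y) F & r = mu_fork x y F).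

From Stdlib Require Import ClassicalEpsilon.
From mathcomp Require Import all_boot all_order all_algebra zify.
Import Order.TTheory GRing.Theory Num.Theory.
Set Implicit Arguments. Unset Strict Implicit. Unset Printing Implicit Defensive.

(* All the maxima involved are attained, and by induction on y one keeps a
   closed fork for xy that is optimal for rho and for mu at the same time.
   An adversarial symbol raises every reserve, hence every reach, by one and
   changes nothing else.  For an honest symbol, the lower bound grafts below a
   tine t of nonnegative reach a path through gap(t) adversarial slots of its
   reserve, ending in the new honest vertex h at depth height + 1: old reaches
   drop by one, h has reach 0 and is disjoint from every tine t was disjoint
   from.  Taking t the deepest tine, or, when mu = 0 < rho, a member of an
   optimal pair disjoint from a rho-optimal tine, gives the claimed values.
   For the upper bound, a closed fork for the extended string has a unique
   vertex h with the new label; pruning h and the adversarial path leading to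
   it leaves a closed fork for the old string in which every surviving tine has
   its reach raised by at least one, and every pruned tine other than h is
   dominated by a surviving ancestor. *)

Lemma int_max_exists (P : int -> Prop) r0 B :
  P r0 -> (forall s, P s -> (s <= B)%R) ->
  exists r, P r /\ forall s, P s -> (s <= r)%R.
Proof.
move=> Pr0 PB.
suff: forall n r, P r -> (`|B - r|%N <= n)%N ->
  exists r, P r /\ forall s, P s -> (s <= r)%R by move/(_ _ r0 Pr0 (leqnn _)).
elim=> [|n IHn] r Pr rB.
- exists r; split=> // s Ps; have := PB _ Ps; have := PB _ Pr; lia.
- have [[s [Ps lt_rs]]|no_larger] := classic (exists s, P s /\ (r < s)%R).
  + by apply: (IHn s Ps); have := PB _ Ps; lia.
  + exists r; split=> // s Ps; case: (lerP s r) => // lt_rs.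
    by case: no_larger; exists s.
Qed.

Lemma imax_spec (P : int -> Prop) r0 B :
  P r0 -> (forall s, P s -> (s <= B)%R) ->
  P (imax P) /\ forall s, P s -> (s <= imax P)%R.
Proof.
move=> Pr0 PB; apply: (epsilon_spec (inhabits 0%Z) (fun r => P r /\ _)).
exact: int_max_exists Pr0 PB.
Qed.

Lemma imax_eq (P : int -> Prop) r :
  P r -> (forall s, P s -> (s <= r)%R) -> imax P = r.
Proof.
move=> Pr r_max; have [Pm m_max] := imax_spec Pr r_max.
by apply/eqP; rewrite eq_le r_max ?m_max.
Qed.

Section Tines.
Variable F : fork.

(* Parents precede their children up to [v]: this is what makes the
   fuel-bounded [tine_aux] follow parent links all the way to the root. *)
Definition rooted_upto (v : nat) := forall u, 0 < u <= v -> fpar F u < u.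

Lemma rooted_upto_le u v : rooted_upto v -> u <= v -> rooted_upto u.
Proof. by move=> rv uv x /andP[x0 xu]; apply: rv; rewrite x0 (leq_trans xu uv). Qed.

Lemma rooted_upto_par v : 0 < v -> rooted_upto v -> rooted_upto (fpar F v).
Proof.
move=> v0 rv; have pv : fpar F v < v by apply: rv; rewrite v0 /=.
exact: rooted_upto_le rv (ltnW pv).
Qed.

Lemma tine_aux_fuel f g v :
  rooted_upto v -> v <= f -> v <= g -> tine_aux F f v = tine_aux F g v.
Proof.
elim: f g v => [|f IHf] g v rv vf vg.
  by move: vf; rewrite leqn0 => /eqP->; case: g vg.
case: g vg => [|g] vg; first by move: vg; rewrite leqn0 => /eqP->.
rewrite /=; case: eqP => // /eqP v0.
have pv : fpar F v < v by apply: rv; rewrite lt0n v0 leqnn.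
congr cons; apply: IHf; [by apply: rooted_upto_par; rewrite ?lt0n | lia | lia].
Qed.

Lemma tineS v : 0 < v -> rooted_upto v -> tine F v = v :: tine F (fpar F v).
Proof.
case: v => // v _ rv; rewrite /tine /=; congr cons.
have pv : fpar F v.+1 < v.+1 by apply: rv; rewrite leqnn.
by apply: tine_aux_fuel => //; apply: rooted_upto_par.
Qed.

Lemma mem_tineS v u : 0 < v -> rooted_upto v ->
  (u \in tine F v) = (u == v) || (u \in tine F (fpar F v)).
Proof. by move=> v0 rv; rewrite tineS // in_cons. Qed.

Lemma depthS v : 0 < v -> rooted_upto v -> depth F v = (depth F (fpar F v)).+1.
Proof.
move=> v0 rv; rewrite /depth tineS //=.
suff: 0 < size (tine F (fpar F v)) by case: (size _).
by rewrite /tine; case: (fpar F v) => //= n; case: ifP.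
Qed.

Lemma mem_tine_self v : rooted_upto v -> v \in tine F v.
Proof. by case: v => [|v] // rv; rewrite tineS // in_cons eqxx. Qed.

Lemma mem_tine_par v : 0 < v -> rooted_upto v -> fpar F v \in tine F v.
Proof.
by move=> v0 rv; rewrite mem_tineS // mem_tine_self ?orbT //; apply: rooted_upto_par.
Qed.

Lemma mem_tine_le v u : rooted_upto v -> u \in tine F v -> u <= v.
Proof.
elim/ltn_ind: v => v IHv rv; have [->|v0] := posnP v; first by rewrite inE => /eqP->.
have pv : fpar F v < v by apply: rv; rewrite v0 leqnn.
rewrite mem_tineS // => /orP[/eqP->//|/(IHv _ pv (rooted_upto_par v0 rv))].
by move/leq_ltn_trans/(_ pv)/ltnW.
Qed.

Lemma mem_tine0 v : rooted_upto v -> 0 \in tine F v.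
Proof.
elim/ltn_ind: v => v IHv rv; have [->//|v0] := posnP v.
have pv : fpar F v < v by apply: rv; rewrite v0 leqnn.
by rewrite mem_tineS // IHv ?orbT //; apply: rooted_upto_par.
Qed.

Lemma tine_trans v u x : rooted_upto v -> u \in tine F v -> x \in tine F u -> x \in tine F v.
Proof.
elim/ltn_ind: v => v IHv rv; have [->|v0] := posnP v; first by rewrite inE => /eqP->.
have pv : fpar F v < v by apply: rv; rewrite v0 leqnn.
rewrite [u \in _]mem_tineS // => /orP[/eqP-> //|uv xu].
by rewrite mem_tineS // (IHv _ pv (rooted_upto_par v0 rv) uv xu) orbT.
Qed.

Lemma tine_prefix v a b : rooted_upto v -> a \in tine F v -> b \in tine F v ->
  a \in tine F b \/ b \in tine F a.
Proof.
elim/ltn_ind: v => v IHv rv; have [->|v0] := posnP v.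
  by rewrite !inE => /eqP-> /eqP->; left.
have pv : fpar F v < v by apply: rv; rewrite v0 leqnn.
have rp := rooted_upto_par v0 rv.
rewrite !(mem_tineS _ v0 rv) => /orP[/eqP->|av] /orP[/eqP->|bv].
- by left; apply: mem_tine_self.
- by right; rewrite mem_tineS // bv orbT.
- by left; rewrite mem_tineS // av orbT.
- exact: IHv pv rp av bv.
Qed.

Lemma tine_child v u : rooted_upto u -> v \in tine F u -> v != u ->
  exists c, [/\ c \in tine F u, 0 < c & fpar F c = v].
Proof.
elim/ltn_ind: u => u IHu ru; have [->|u0] := posnP u; first by rewrite inE => ->.
have pu : fpar F u < u by apply: ru; rewrite u0 leqnn.
rewrite mem_tineS // => /orP[/eqP->|vp _]; first by rewrite eqxx.
have [->|vnp] := eqVneq v (fpar F u); first by exists u; rewrite mem_tine_self.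
have [c [cp c0 pc]] := IHu _ pu (rooted_upto_par u0 ru) vp vnp.
by exists c; rewrite mem_tineS // cp orbT.
Qed.

Lemma depth_tine v u : rooted_upto v -> u \in tine F v -> depth F u <= depth F v.
Proof.
elim/ltn_ind: v => v IHv rv; have [->|v0] := posnP v; first by rewrite inE => /eqP->.
have pv : fpar F v < v by apply: rv; rewrite v0 leqnn.
rewrite mem_tineS // => /orP[/eqP->//|up].
by rewrite (depthS v0 rv) (leq_trans (IHv _ pv (rooted_upto_par v0 rv) up)).
Qed.

End Tines.

Lemma tine_eq_par G G' v : rooted_upto G v ->
  (forall u, 0 < u <= v -> fpar G u = fpar G' u) -> tine G v = tine G' v.
Proof.
elim/ltn_ind: v => v IHv rv same_par; have [->//|v0] := posnP v.
have rv' : rooted_upto G' v by move=> u uv; rewrite -same_par //; apply: rv.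
have pv : fpar G v < v by apply: rv; rewrite v0 leqnn.
rewrite (tineS v0 rv) (tineS v0 rv') -same_par ?v0 ?leqnn //; congr cons.
apply: IHv => //; first exact: rooted_upto_par.
by move=> u /andP[u0 uv]; apply: same_par; rewrite u0 (leq_trans uv (ltnW pv)).
Qed.

Lemma mem_vertices F v : (v \in vertices F) = (v <= fsize F).
Proof. by rewrite /vertices mem_iota add0n ltnS. Qed.

Section ForkBasics.
Variables (w : charstring) (G : fork).
Hypothesis fG : is_fork w G.

Lemma fork_rooted v : v <= fsize G -> rooted_upto G v.
Proof. by move=> vN u /andP[u0 uv]; apply: fG.1; rewrite u0 (leq_trans uv vN). Qed.

Lemma fork_par_lt v : 0 < v <= fsize G -> fpar G v < v.
Proof. exact: fG.1. Qed.

Lemma fork_lab_le v : v <= fsize G -> flab G v <= size w.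
Proof. by have [_ [_ _ lab_le _ _]] := fG; apply: lab_le. Qed.

Lemma tine_le_fsize v u : v <= fsize G -> u \in tine G v -> u <= fsize G.
Proof. by move=> vN /(mem_tine_le (fork_rooted vN))/leq_trans; apply. Qed.

Lemma tine_sub v u x : v <= fsize G -> u \in tine G v -> x \in tine G u -> x \in tine G v.
Proof. by move=> vN; apply: tine_trans (fork_rooted vN). Qed.

Lemma lab_tine v u : v <= fsize G -> u \in tine G v -> u != v -> flab G u < flab G v.
Proof.
have [_ [_ lab_par _ _ _]] := fG.
elim/ltn_ind: v => v IHv vN; have [->|v0] := posnP v; first by rewrite inE => ->.
have pv : fpar G v < v by apply: fork_par_lt; rewrite v0.
have lpv : flab G (fpar G v) < flab G v by apply: lab_par; rewrite v0.
rewrite (mem_tineS _ v0 (fork_rooted vN)) => /orP[/eqP->|up]; first by rewrite eqxx.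
move=> _; have [->//|unp] := eqVneq u (fpar G v).
by rewrite (ltn_trans (IHv _ pv (ltnW (leq_trans pv vN)) up unp)).
Qed.

Lemma lab_tine_le v u : v <= fsize G -> u \in tine G v -> flab G u <= flab G v.
Proof.
by move=> vN uv; have [->//|uv'] := eqVneq u v; rewrite ltnW // lab_tine.
Qed.

Lemma lab_pos v : 0 < v <= fsize G -> 0 < flab G v.
Proof.
move=> /andP[v0 vN]; have [_ [<- _ _ _ _]] := fG.
by apply: lab_tine (mem_tine0 (fork_rooted vN)) _ => //; rewrite eq_sym -lt0n.
Qed.

Lemma lab_honest_inj i u v : honest_idx w i -> u <= fsize G -> v <= fsize G ->
  flab G u = i -> flab G v = i -> u = v.
Proof.
have [_ [_ _ _ honest_once _]] := fG.
move=> hi uN vN lu lv; move: (honest_once i hi); rewrite -size_filter.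
have ui : u \in [seq x <- vertices G | flab G x == i] by rewrite mem_filter lu eqxx mem_vertices.
have vi : v \in [seq x <- vertices G | flab G x == i] by rewrite mem_filter lv eqxx mem_vertices.
case: [seq x <- vertices G | flab G x == i] ui vi => [|a [|b s]] //=.
by rewrite !inE => /eqP-> /eqP->.
Qed.

Lemma leaf_above v : v <= fsize G -> exists u, [/\ u <= fsize G, is_leaf G u & v \in tine G u].
Proof.
move: {2}(fsize G - v) (leqnn (fsize G - v)) => d.
elim: d v => [|d IHd] v vd vN.
  have vE : v = fsize G by lia.
  exists v; split=> //; last exact: mem_tine_self (fork_rooted vN).
  apply/hasPn => c; rewrite mem_vertices => cN; apply/negP => /andP[c0 /eqP pc].
  by have := fork_par_lt (v := c); rewrite c0 cN pc => /(_ isT); lia.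
case leaf_v: (is_leaf G v).
  by exists v; split=> //; exact: mem_tine_self (fork_rooted vN).
move: leaf_v => /negbFE/hasP[c]; rewrite mem_vertices => cN /andP[c0 /eqP pc].
have vc : v < c by rewrite -pc fork_par_lt // c0.
have [u [uN leaf_u cu]] := IHd c (ltac:(lia)) cN.
exists u; split=> //; apply: (tine_sub uN cu).
by rewrite -pc mem_tine_par //; apply: fork_rooted.
Qed.

End ForkBasics.

Lemma depth_le_height G v : v <= fsize G -> depth G v <= height G.
Proof. by move=> vN; apply: leq_bigmax_seq; rewrite ?mem_vertices. Qed.

Lemma bigmax_seq_attained (s : seq nat) (f : nat -> nat) : s != [::] ->
  exists2 v, v \in s & \max_(i <- s) f i = f v.
Proof.
elim: s => // a s IHs _; rewrite big_cons.
have [->|/IHs[v vs ->]] := eqVneq s [::]; first by exists a; rewrite ?inE // big_nil maxn0.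
have [le_av|lt_va] := leqP (f a) (f v); first by exists v; rewrite ?inE ?vs ?orbT // maxnr.
by exists a; rewrite ?inE ?eqxx // maxnl // ltnW.
Qed.

Lemma height_attained G : exists2 v, v <= fsize G & height G = depth G v.
Proof.
by have [v] := @bigmax_seq_attained (vertices G) (depth G) isT; rewrite mem_vertices; exists v.
Qed.

Lemma reach_le_size w G v : (reach w G v <= Posz (size w))%R.
Proof.
suff: reserve w G v <= size w by rewrite /reach; lia.
by rewrite (leq_trans (count_size _ _)) ?size_iota.
Qed.

Lemma rho_fork_spec w G :
  (forall v, v <= fsize G -> (reach w G v <= rho_fork w G)%R) /\
  exists2 v, v <= fsize G & rho_fork w G = reach w G v.
Proof.
rewrite /rho_fork; have [|[v vN ->] rho_max] := @imax_spec
  (fun r => exists2 v, v <= fsize G & r = reach w G v) (reach w G 0) (Posz (size w)) (ex_intro2 _ _ 0 (leq0n _) erefl).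
  by move=> s [v _ ->]; apply: reach_le_size.
by split=> [u uN|]; [apply: rho_max; exists u | exists v].
Qed.

Definition mu_over (k : nat) (w : charstring) (F : fork) : int :=
  imax (fun r => exists v1 v2, [/\ v1 <= fsize F, v2 <= fsize F,
          disjoint_over k F v1 v2 & r = Order.min (reach w F v1) (reach w F v2)]).

Lemma mu_forkE x y F : mu_fork x y F = mu_over (size x) (x ++ y) F.
Proof. by []. Qed.

Lemma mu_over_spec k w G :
  (forall v1 v2, v1 <= fsize G -> v2 <= fsize G -> disjoint_over k G v1 v2 ->
     (Order.min (reach w G v1) (reach w G v2) <= mu_over k w G)%R) /\
  exists v1 v2, [/\ v1 <= fsize G, v2 <= fsize G, disjoint_over k G v1 v2 &
     mu_over k w G = Order.min (reach w G v1) (reach w G v2)].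
Proof.
rewrite /mu_over; have [|[v1 [v2 [v1N v2N dis ->]]] mu_max] := @imax_spec
  (fun r => exists v1 v2, [/\ v1 <= fsize G, v2 <= fsize G,
          disjoint_over k G v1 v2 & r = Order.min (reach w G v1) (reach w G v2)])
  (Order.min (reach w G 0) (reach w G 0)) (Posz (size w))
  (ex_intro _ 0 (ex_intro _ 0 (And4 (leq0n _) (leq0n _) isT erefl))).
  by move=> s [v1 [v2 [_ _ _ ->]]]; rewrite ge_min reach_le_size.
by split=> [u1 u2 u1N u2N udis|]; [apply: mu_max; exists u1, u2 | exists v1, v2].
Qed.

Lemma rho_spec w G0 : closed_fork w G0 ->
  (forall G, closed_fork w G -> (rho_fork w G <= rho w)%R) /\
  exists2 G, closed_fork w G & rho w = rho_fork w G.
Proof.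
move=> cG0; rewrite /rho; have [|[G cG ->] rho_max] := @imax_spec
  (fun r => exists2 F, closed_fork w F & r = rho_fork w F)
  (rho_fork w G0) (Posz (size w)) (ex_intro2 _ _ G0 cG0 erefl).
  by move=> s [F _ ->]; have [_ [v _ ->]] := rho_fork_spec w F; apply: reach_le_size.
by split=> [F cF|]; [apply: rho_max; exists F | exists G].
Qed.

Lemma mu_spec x y G0 : closed_fork (x ++ y) G0 ->
  (forall G, closed_fork (x ++ y) G -> (mu_fork x y G <= mu x y)%R) /\
  exists2 G, closed_fork (x ++ y) G & mu x y = mu_fork x y G.
Proof.
move=> cG0; rewrite /mu; have [|[G cG ->] mu_max] := @imax_spec
  (fun r => exists2 F, closed_fork (x ++ y) F & r = mu_fork x y F)
  (mu_fork x y G0) (Posz (size (x ++ y))) (ex_intro2 _ _ G0 cG0 erefl).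
  move=> s [F _ ->]; rewrite mu_forkE.
  have [_ [v1 [v2 [_ _ _ ->]]]] := mu_over_spec (size x) (x ++ y) F.
  by rewrite ge_min reach_le_size.
by split=> [F cF|]; [apply: mu_max; exists F | exists G].
Qed.

Lemma disjoint_overP k G a b :
  reflect (forall u, u \in tine G a -> u \in tine G b -> u != 0 -> flab G u <= k)
          (disjoint_over k G a b).
Proof.
apply: (iffP hasPn) => dis u ua.
- by move=> ub u0; move: (dis u ua); rewrite u0 ub /= andbT -leqNgt.
- apply/negP => /andP[/andP[u0 ku] ub].
  by move: (dis u ua ub u0); rewrite leqNgt ku.
Qed.

Lemma disjoint_over_sym k G a b : disjoint_over k G a b = disjoint_over k G b a.
Proof. by apply/disjoint_overP/disjoint_overP => dis u ua ub; apply: dis. Qed.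

Lemma disjoint_over_sub k G a a' b b' :
  {subset tine G a' <= tine G a} -> {subset tine G b' <= tine G b} ->
  disjoint_over k G a b -> disjoint_over k G a' b'.
Proof.
move=> aa' bb' /disjoint_overP dis; apply/disjoint_overP => u ua ub.
by apply: dis; [apply: aa' | apply: bb'].
Qed.

Lemma disjoint_over_split w k F v s1 s2 : is_fork w F ->
  v <= fsize F -> s1 <= fsize F -> s2 <= fsize F ->
  disjoint_over k F s1 s2 -> disjoint_over k F v s1 \/ disjoint_over k F v s2.
Proof.
move=> fF vN s1N s2N /disjoint_overP dis.
case d1: (disjoint_over k F v s1); first by left.
case d2: (disjoint_over k F v s2); first by right.
move/negbFE/hasP: d1 => [u1 u1v /andP[/andP[u10 lu1] u1s]].
move/negbFE/hasP: d2 => [u2 u2v /andP[/andP[u20 lu2] u2s]].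
have [u12|u21] := tine_prefix (fork_rooted fF vN) u1v u2v.
- by have := dis u1 u1s (tine_sub fF s2N u2s u12) u10; rewrite leqNgt lu1.
- by have := dis u2 (tine_sub fF s1N u1s u21) u2s u20; rewrite leqNgt lu2.
Qed.

Lemma honest_idx_range w i : honest_idx w i -> 0 < i <= size w.
Proof. by case/andP. Qed.

Lemma adv_idx_range w i : adv_idx w i -> 0 < i <= size w.
Proof. by case/andP. Qed.

Lemma honest_idx_adv w i : honest_idx w i -> ~~ adv_idx w i.
Proof. by rewrite /honest_idx /adv_idx => /andP[_ /negbTE->]; rewrite andbF. Qed.

Lemma nth_false_rcons (w : charstring) b i :
  nth false (rcons w b) i = if i < size w then nth false w i else (i == size w) && b.
Proof. by rewrite nth_rcons; case: ltnP => // _; case: eqP. Qed.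

Lemma honest_idx_rcons w b i : i <= size w -> honest_idx (rcons w b) i = honest_idx w i.
Proof.
move=> iw; rewrite /honest_idx size_rcons nth_false_rcons.
by case: i iw => [|i] iw //=; rewrite iw (leq_trans iw (leqnSn _)).
Qed.

Lemma adv_idx_rcons w b i : i <= size w -> adv_idx (rcons w b) i = adv_idx w i.
Proof.
move=> iw; rewrite /adv_idx size_rcons nth_false_rcons.
by case: i iw => [|i] iw //=; rewrite iw (leq_trans iw (leqnSn _)).
Qed.

Lemma honest_idx_rcons_last w b : honest_idx (rcons w b) (size w).+1 = ~~ b.
Proof. by rewrite /honest_idx size_rcons nth_false_rcons /= ltnn eqxx leqnn. Qed.

Lemma adv_idx_rcons_last w b : adv_idx (rcons w b) (size w).+1 = b.
Proof. by rewrite /adv_idx size_rcons nth_false_rcons /= ltnn eqxx leqnn. Qed.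

Lemma honest_idx_rcons_true w i : honest_idx (rcons w true) i = honest_idx w i.
Proof.
have [iw|wi] := leqP i (size w); first exact: honest_idx_rcons.
have [->|ne] := eqVneq i (size w).+1.
  by rewrite honest_idx_rcons_last /honest_idx ltnn andbF.
rewrite /honest_idx size_rcons (_ : i <= (size w).+1 = false) ?andbF; last by lia.
by rewrite (_ : i <= size w = false) ?andbF //; lia.
Qed.

Lemma reserve_rcons w b G v :
  reserve (rcons w b) G v = reserve w G v + (b && (flab G v <= size w)).
Proof.
rewrite /reserve size_rcons -(addn1 (size w)) iotaD count_cat /= add1n addn0 adv_idx_rcons_last.
congr addn; apply: eq_in_count => i; rewrite mem_iota => /andP[_ iw].
by rewrite adv_idx_rcons // -ltnS -[X in _ < X]add1n.
Qed.

Lemma reach_rcons w b G v :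
  reach (rcons w b) G v = (reach w G v + Posz (b && (flab G v <= size w)%N))%R.
Proof. by rewrite /reach reserve_rcons; case: (_ && _) => /=; lia. Qed.

Lemma reach_rcons_true w G v : is_fork w G -> v <= fsize G ->
  reach (rcons w true) G v = (reach w G v + 1)%R.
Proof. by move=> fG vN; rewrite reach_rcons (fork_lab_le fG vN). Qed.

Lemma reach_rcons_false w G v : reach (rcons w false) G v = reach w G v.
Proof. by rewrite reach_rcons addr0. Qed.

(* An adversarial final symbol cannot label a leaf of a closed fork, so every
   label stays within w. *)
Lemma closed_fork_lab_le_rcons_true w G v : closed_fork (rcons w true) G ->
  v <= fsize G -> flab G v <= size w.
Proof.
move=> [fG closed] vN; have := fork_lab_le fG vN; rewrite size_rcons leq_eqVlt ltnS.
case/orP=> [/eqP lv|//]; have [u [uN leaf_u vu]] := leaf_above fG vN.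
have lu : flab G u = (size w).+1.
  apply/eqP; rewrite eqn_leq -{2}lv (lab_tine_le fG) // andbT.
  by rewrite -(size_rcons w true) (fork_lab_le fG).
have := closed u uN leaf_u; rewrite /honest_vertex lu honest_idx_rcons_last orbF => /eqP u0.
by have [_ [l0 _ _ _ _]] := fG; move: lu; rewrite u0 l0.
Qed.

Lemma closed_fork_rcons_true w G : closed_fork (rcons w true) G <-> closed_fork w G.
Proof.
split=> [cG|[[rooted [l0 lab_par lab_le honest_once honest_depth]] closed]].
- have lab_le' := closed_fork_lab_le_rcons_true cG.
  case: cG => [[rooted [l0 lab_par _ honest_once honest_depth]] closed].
  split; first split=> //; first split=> //.
  + by move=> i hi; apply: honest_once; rewrite honest_idx_rcons_true.
  + by move=> u v uN vN; rewrite -!(honest_idx_rcons_true w); apply: honest_depth.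
  + by move=> v vN /(closed v vN); rewrite /honest_vertex honest_idx_rcons // lab_le'.
- split; first split=> //; first split=> //.
  + by move=> v vN; rewrite size_rcons (leq_trans (lab_le v vN)).
  + by move=> i; rewrite honest_idx_rcons_true; apply: honest_once.
  + by move=> u v uN vN; rewrite !honest_idx_rcons_true; apply: honest_depth.
  + by move=> v vN /(closed v vN); rewrite /honest_vertex honest_idx_rcons // lab_le.
Qed.

Lemma rho_fork_shift w w' G c :
  (forall v, v <= fsize G -> reach w' G v = (reach w G v + c)%R) ->
  rho_fork w' G = (rho_fork w G + c)%R.
Proof.
move=> shift; have [reach_le [v vN rho_v]] := rho_fork_spec w G.
apply: imax_eq; first by exists v; rewrite // shift // rho_v.
by move=> s [u uN ->]; rewrite shift // lerD2r reach_le.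
Qed.

Lemma mu_over_shift k w w' G c :
  (forall v, v <= fsize G -> reach w' G v = (reach w G v + c)%R) ->
  mu_over k w' G = (mu_over k w G + c)%R.
Proof.
move=> shift; have [min_le [v1 [v2 [v1N v2N dis mu_v]]]] := mu_over_spec k w G.
apply: imax_eq; first by exists v1, v2; split=> //; rewrite !shift // mu_v addr_minl.
move=> s [u1 [u2 [u1N u2N udis ->]]].
by rewrite !shift // -addr_minl lerD2r min_le.
Qed.

Lemma count_lt_sub (T : eqType) (a b : pred T) s z :
  subpred a b -> z \in s -> b z -> ~~ a z -> count a s < count b s.
Proof.
move=> ab /perm_to_rem/permP zs bz naz; rewrite !zs /= bz (negbTE naz) ltnS.
exact: sub_count.
Qed.

Lemma reach_adv_le_par w G v : is_fork w G -> 0 < v <= fsize G ->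
  adv_idx w (flab G v) -> (reach w G v <= reach w G (fpar G v))%R.
Proof.
move=> fG /andP[v0 vN] adv_v.
have [_ [_ lab_par _ _ _]] := fG.
have lp : flab G (fpar G v) < flab G v by apply: lab_par; rewrite v0.
have dv := depthS v0 (fork_rooted fG vN).
have := depth_le_height vN.
have : reserve w G v < reserve w G (fpar G v).
  apply: (count_lt_sub (z := flab G v)).
  - by move=> i /andP[-> /(ltn_trans lp)->].
  - by rewrite mem_iota; have := adv_idx_range adv_v; lia.
  - by rewrite adv_v lp.
  - by rewrite ltnn andbF.
by rewrite /reach /gap; lia.
Qed.

Definition honest_extension (w : charstring) (F : fork) (t : nat) (F' : fork) : Prop :=
  [/\ closed_fork (rcons w false) F', fsize F <= fsize F',
   forall v, v <= fsize F -> reach (rcons w false) F' v = (reach w F v - 1)%R,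
   forall k s1 s2, s1 <= fsize F -> s2 <= fsize F ->
       disjoint_over k F s1 s2 -> disjoint_over k F' s1 s2 &
   exists h, [/\ h <= fsize F', reach (rcons w false) F' h = 0%R &
     forall k s, s <= fsize F -> disjoint_over k F t s -> disjoint_over k F' h s]].

(* The new vertices N+1, ..., N+m+1 (N = fsize F) form a path hanging below t;
   N+j is labelled labs j for j <= m and the leaf N+m+1 is labelled l. *)
Definition graft (F : fork) (t m : nat) (labs : nat -> nat) (l : nat) : fork :=
  Fork (fsize F + m).+1
   (fun v => if v <= fsize F then fpar F v else if v == (fsize F).+1 then t else v.-1)
   (fun v => if v <= fsize F then flab F v else if v == (fsize F + m).+1 then l
             else labs (v - fsize F)).

Section Graft.
Variables (w : charstring) (F : fork) (t m : nat) (labs : nat -> nat).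
Hypotheses (cF : closed_fork w F) (tN : t <= fsize F)
  (t_gap : depth F t + m = height F)
  (labs_first : 0 < m -> flab F t < labs 1)
  (labs_incr : forall j, 0 < j < m -> labs j < labs j.+1)
  (labs_adv : forall j, 0 < j <= m -> adv_idx w (labs j)).

Let N := fsize F.
Let n := size w.
Let F' := graft F t m labs n.+1.
Let fF : is_fork w F := cF.1.

Lemma graft_size : fsize F' = (N + m).+1. Proof. by []. Qed.

Lemma graft_par_old v : v <= N -> fpar F' v = fpar F v.
Proof. by rewrite /= => ->. Qed.

Lemma graft_lab_old v : v <= N -> flab F' v = flab F v.
Proof. by rewrite /= => ->. Qed.

Lemma graft_par_new v : N < v -> fpar F' v = if v == N.+1 then t else v.-1.
Proof. by rewrite /= ltnNge => /negbTE->. Qed.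

Lemma graft_lab_new v : N < v ->
  flab F' v = if v == (N + m).+1 then n.+1 else labs (v - N).
Proof. by rewrite /= ltnNge => /negbTE->. Qed.

Lemma graft_lab_adv v : N < v <= N + m -> adv_idx w (flab F' v).
Proof.
move=> /andP[Nv vm]; rewrite graft_lab_new // ifF; last by apply/negbTE; lia.
by apply: labs_adv; lia.
Qed.

Lemma graft_par_lt v : 0 < v <= fsize F' -> fpar F' v < v.
Proof.
move=> /andP[v0 vN]; have [vN'|Nv] := leqP v N.
  by rewrite graft_par_old // (fork_par_lt fF) // v0.
by rewrite graft_par_new //; case: eqP => [->|_]; [rewrite ltnS | rewrite prednK].
Qed.

Lemma graft_rooted v : v <= fsize F' -> rooted_upto F' v.
Proof. by move=> vN u /andP[u0 uv]; apply: graft_par_lt; rewrite u0 (leq_trans uv). Qed.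

Lemma graft_tine_old v : v <= N -> tine F' v = tine F v.
Proof.
move=> vN; symmetry; apply: (tine_eq_par (fork_rooted fF vN)).
by move=> u /andP[_ uv]; rewrite graft_par_old // (leq_trans uv).
Qed.

Lemma graft_depth_old v : v <= N -> depth F' v = depth F v.
Proof. by move=> vN; rewrite /depth graft_tine_old. Qed.

Lemma graft_tine_new j : 0 < j <= m.+1 ->
  depth F' (N + j) = depth F t + j /\
  forall u, u \in tine F' (N + j) -> N < u \/ u \in tine F t.
Proof.
elim: j => // j IHj /andP[_ jm].
have rj : rooted_upto F' (N + j.+1) by apply: graft_rooted; rewrite graft_size; lia.
have pj : fpar F' (N + j.+1) = if j == 0 then t else N + j.
  rewrite graft_par_new; last lia.
  by have [->|j0] := eqVneq j 0; [rewrite addn1 eqxx | rewrite ifF; [lia | apply/negbTE; lia]].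
have j0 : 0 < N + j.+1 by lia.
split.
- rewrite (depthS j0 rj) pj; have [->|nj0] := eqVneq j 0; first by rewrite graft_depth_old // addn1.
  by have [-> _] := IHj (ltac:(lia)); rewrite addnS.
- move=> u; rewrite (mem_tineS _ j0 rj) => /orP[/eqP->|]; first by left; lia.
  rewrite pj; have [_|nj0] := eqVneq j 0; first by rewrite graft_tine_old //; right.
  by have [_] := IHj (ltac:(lia)); apply.
Qed.

Lemma graft_depth_leaf : depth F' (N + m).+1 = (height F).+1.
Proof. by have [+ _] := graft_tine_new (j := m.+1) (ltac:(lia)); rewrite addnS => ->; lia. Qed.

Lemma graft_lab_le v : v <= fsize F' -> flab F' v <= n.+1.
Proof.
move=> vN; have [vN'|Nv] := leqP v N.
  by rewrite graft_lab_old // (leq_trans (fork_lab_le fF vN')).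
have [->|ne] := eqVneq v (N + m).+1; first by rewrite graft_lab_new ?eqxx //; lia.
have /adv_idx_range : adv_idx w (flab F' v).
  by apply: graft_lab_adv; move: vN ne; rewrite graft_size; lia.
lia.
Qed.

Lemma graft_honest v : v <= fsize F' -> honest_idx (rcons w false) (flab F' v) ->
  v <= N \/ v = (N + m).+1.
Proof.
move=> vN; have [vN'|Nv] := leqP v N; first by left.
have [->|ne] := eqVneq v (N + m).+1; first by right.
have adv_v : adv_idx w (flab F' v) by apply: graft_lab_adv; move: vN ne; rewrite graft_size; lia.
rewrite honest_idx_rcons; last by have := adv_idx_range adv_v; lia.
by move/honest_idx_adv; rewrite adv_v.
Qed.

Lemma graft_lab_par_lt v : 0 < v <= fsize F' -> flab F' (fpar F' v) < flab F' v.
Proof.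
have [_ [_ lab_par _ _ _]] := fF.
move=> /andP[v0 vN]; have [vN'|Nv] := leqP v N.
  rewrite graft_par_old // !graft_lab_old ?lab_par ?v0 //.
  by have := fork_par_lt fF (v := v); rewrite v0 vN' => /(_ isT); lia.
rewrite (graft_lab_new Nv) (graft_par_new Nv).
have [->|vN1] := eqVneq v N.+1.
  rewrite (graft_lab_old tN); have [e|ne] := eqVneq N.+1 (N + m).+1.
    by have := fork_lab_le fF tN; lia.
  by rewrite (_ : N.+1 - N = 1); [apply: labs_first; lia | lia].
rewrite graft_lab_new; last lia.
rewrite ifF; last by apply/negbTE; move: vN; rewrite graft_size; lia.
have [e|ne] := eqVneq v (N + m).+1.
  have /adv_idx_range : adv_idx w (labs (v.-1 - N)) by apply: labs_adv; lia.
  lia.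
have := labs_incr (j := v.-1 - N) (ltac:(move: vN; rewrite graft_size; lia)).
by rewrite (_ : (v.-1 - N).+1 = v - N); last lia.
Qed.

Lemma graft_honest_once i : honest_idx (rcons w false) i ->
  count (fun v => flab F' v == i) (vertices F') = 1.
Proof.
have [_ [_ _ _ honest_once _]] := fF.
move=> hi; have count1 (a : pred nat) x : count a [:: x] = a x by rewrite /= addn0.
have -> : vertices F' = iota 0 N.+1 ++ iota N.+1 m ++ [:: (N + m).+1].
  rewrite /vertices graft_size (_ : (N + m).+2 = N.+1 + m + 1); last lia.
  by rewrite !iotaD !add0n -catA addSn.
have no_new j : N < j <= N + m -> flab F' j != i.
  move=> jm; have adv_j := graft_lab_adv jm; apply: contraTneq hi => <-.
  rewrite honest_idx_rcons; last by have := adv_idx_range adv_j; lia.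
  by apply: contraL adv_j; apply: honest_idx_adv.
rewrite !count_cat count1 graft_lab_new ?eqxx; last lia.
rewrite [count _ (iota N.+1 m)](eq_in_count (a2 := pred0)) ?count_pred0; last first.
  by move=> j; rewrite mem_iota => jm; apply/negbTE/no_new; lia.
have [iw|wi] := leqP i n.
  have hw : honest_idx w i by rewrite -(honest_idx_rcons false iw).
  rewrite -(honest_once i hw) (_ : (n.+1 == i) = false) ?addn0; last by apply/negbTE; lia.
  by apply: eq_in_count => v; rewrite mem_iota => vN; rewrite graft_lab_old //; lia.
have -> : i = n.+1 by have := honest_idx_range hi; rewrite size_rcons; lia.
rewrite eqxx (eq_in_count (a2 := pred0)) ?count_pred0 //.
move=> v; rewrite mem_iota => vN; rewrite graft_lab_old; last lia.
by apply/negbTE; rewrite neq_ltn ltnS (fork_lab_le fF) //; lia.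
Qed.

Lemma graft_honest_depth u v : u <= fsize F' -> v <= fsize F' ->
  honest_idx (rcons w false) (flab F' u) -> honest_idx (rcons w false) (flab F' v) ->
  flab F' u < flab F' v -> depth F' u < depth F' v.
Proof.
have [_ [_ _ _ _ honest_depth]] := fF.
move=> uN vN hu hv luv.
have [uN'|uh] := graft_honest uN hu; have [vN'|vh] := graft_honest vN hv.
- rewrite !graft_depth_old //; apply: honest_depth; rewrite -?graft_lab_old //.
  + by move: hu; rewrite graft_lab_old // honest_idx_rcons // fork_lab_le.
  + by move: hv; rewrite graft_lab_old // honest_idx_rcons // fork_lab_le.
- by rewrite vh graft_depth_leaf graft_depth_old // ltnS depth_le_height.
- by move: luv; rewrite uh graft_lab_new ?eqxx; [have := graft_lab_le vN; lia | lia].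
- by move: luv; rewrite uh vh ltnn.
Qed.

Lemma graft_closed : closed_fork (rcons w false) F'.
Proof.
split.
  have [_ [l0 _ _ _ _]] := fF.
  split; first exact: graft_par_lt.
  split; [by rewrite graft_lab_old | exact: graft_lab_par_lt | | exact: graft_honest_once
         | exact: graft_honest_depth].
  by move=> v vN; rewrite size_rcons graft_lab_le.
move=> v vN leaf_v; have [vN'|Nv] := leqP v N.
- have [vt|vt] := eqVneq v t.
    move/hasPn: leaf_v => /(_ N.+1).
    by rewrite mem_vertices graft_size graft_par_new // eqxx vt eqxx /=; lia.
  have leaf_vF : is_leaf F v.
    apply/hasPn => c; rewrite mem_vertices => cN; apply/negP => /andP[c0 /eqP pc].
    have cN' : c <= fsize F' by rewrite graft_size; lia.
    move/hasPn: leaf_v => /(_ c); rewrite mem_vertices cN' graft_par_old // c0 pc eqxx.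
    by move/(_ isT).
  have := cF.2 v vN' leaf_vF.
  by rewrite /honest_vertex graft_lab_old // honest_idx_rcons // fork_lab_le.
- have [->|vh] := eqVneq v (N + m).+1.
    by rewrite /honest_vertex graft_lab_new ?eqxx ?honest_idx_rcons_last ?orbT //; lia.
  move/hasPn: leaf_v => /(_ v.+1).
  rewrite mem_vertices graft_size graft_par_new; last lia.
  rewrite ifF ?eqxx /=; last by apply/negbTE; lia.
  by move: vN vh; rewrite graft_size => vN vh; lia.
Qed.

Lemma graft_height : height F' = (height F).+1.
Proof.
apply/eqP; rewrite eqn_leq -{2}graft_depth_leaf depth_le_height ?graft_size // andbT.
apply/bigmax_leqP_seq => v; rewrite mem_vertices graft_size => vN _.
have [vN'|Nv] := leqP v N; first by rewrite graft_depth_old // ltnW // ltnS depth_le_height.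
have [+ _] := graft_tine_new (j := v - N) (ltac:(lia)).
by rewrite subnKC ?(ltnW Nv) // => ->; lia.
Qed.

Lemma graft_reach_old v : v <= N -> reach (rcons w false) F' v = (reach w F v - 1)%R.
Proof.
move=> vN; rewrite reach_rcons_false /reach /gap graft_height graft_depth_old //.
have -> : reserve w F' v = reserve w F v by rewrite /reserve graft_lab_old.
by have := depth_le_height vN; lia.
Qed.

Lemma graft_reach_leaf : reach (rcons w false) F' (N + m).+1 = 0%R.
Proof.
rewrite reach_rcons_false /reach /gap graft_height graft_depth_leaf subnn.
suff -> : reserve w F' (N + m).+1 = 0 by [].
rewrite /reserve graft_lab_new ?eqxx; last lia.
apply/eqP; rewrite -leqn0 leqNgt -has_count; apply/hasPn => i.
by rewrite mem_iota => /andP[_ iw]; apply/negP => /andP[_]; lia.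
Qed.

Lemma graft_disjoint_old k s1 s2 : s1 <= N -> s2 <= N ->
  disjoint_over k F s1 s2 -> disjoint_over k F' s1 s2.
Proof.
move=> s1N s2N /disjoint_overP dis; apply/disjoint_overP => u.
rewrite !graft_tine_old // => us1 us2 u0.
by rewrite graft_lab_old ?dis // (tine_le_fsize fF s1N).
Qed.

Lemma graft_disjoint_leaf k s : s <= N ->
  disjoint_over k F t s -> disjoint_over k F' (N + m).+1 s.
Proof.
move=> sN /disjoint_overP dis; apply/disjoint_overP => u uleaf.
rewrite graft_tine_old // => us u0; have uN := tine_le_fsize fF sN us.
have [_] := graft_tine_new (j := m.+1) (ltac:(lia)).
by rewrite addnS => /(_ u uleaf) [|ut]; [lia | rewrite graft_lab_old ?dis].
Qed.

Lemma graft_spec : honest_extension w F t F'.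
Proof.
split; [exact: graft_closed | by rewrite graft_size ltnW // ltnS leq_addr
       | exact: graft_reach_old | exact: graft_disjoint_old | ].
exists (N + m).+1; split; first by rewrite graft_size.
  exact: graft_reach_leaf.
exact: graft_disjoint_leaf.
Qed.

End Graft.

Lemma honest_extension_exists w F t : closed_fork w F -> t <= fsize F ->
  (0 <= reach w F t)%R -> exists F', honest_extension w F t F'.
Proof.
move=> cF tN reach_t.
set L := [seq i <- iota 1 (size w) | adv_idx w i && (flab F t < i)].
set m := gap F t.
have mL : m <= size L by move: reach_t; rewrite size_filter /reach subr_ge0 lez_nat.
have t_gap : depth F t + m = height F by rewrite subnKC // depth_le_height.
have L_sorted : sorted ltn L.
  by apply: sorted_filter; [exact: ltn_trans | exact: iota_ltn_sorted].
pose labs j := nth 0 L j.-1.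
have labsL j : 0 < j <= m -> labs j \in L.
  by move=> jm; apply: mem_nth; have : j.-1 < size L by lia.
exists (graft F t m labs (size w).+1); apply: graft_spec => //.
- by move=> m0; have := labsL 1 (ltac:(lia)); rewrite mem_filter => /andP[/andP[_ ->]].
- move=> j jm; rewrite /labs /=.
  by apply: (sorted_ltn_nth ltn_trans 0 L_sorted); rewrite ?inE; lia.
- by move=> j /labsL; rewrite mem_filter => /andP[/andP[-> _]].
Qed.

Definition restrict_index (keep : pred nat) (v : nat) := count keep (iota 0 v).

Lemma restrict_index_lt (keep : pred nat) u v :
  keep u -> u < v -> restrict_index keep u < restrict_index keep v.
Proof.
move=> ku uv; rewrite /restrict_index (_ : v = u + (v - u).-1.+1); last lia.
by rewrite iotaD count_cat /= add0n ku; lia.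
Qed.

Lemma restrict_index_inj (keep : pred nat) u v : keep u -> keep v ->
  restrict_index keep u = restrict_index keep v -> u = v.
Proof.
move=> ku kv e; case: (ltngtP u v) => // uv.
- by have := restrict_index_lt ku uv; rewrite e ltnn.
- by have := restrict_index_lt kv uv; rewrite e ltnn.
Qed.

(* The subforest of the vertices satisfying [keep], renumbered increasingly;
   vertex [restrict_index keep v] of the result is the vertex [v] of [F]. *)
Definition restrict (F : fork) (keep : pred nat) : fork :=
  Fork (size [seq v <- vertices F | keep v]).-1
    (fun i => restrict_index keep (fpar F (nth 0 [seq v <- vertices F | keep v] i)))
    (fun i => flab F (nth 0 [seq v <- vertices F | keep v] i)).

Section Restrict.
Variables (F : fork) (keep : pred nat).
Hypotheses (par_lt : forall v, 0 < v <= fsize F -> fpar F v < v) (keep0 : keep 0)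
  (keep_par : forall v, 0 < v <= fsize F -> keep v -> keep (fpar F v)).

Let N := fsize F.
Let S := [seq v <- vertices F | keep v].
Let sel i := nth 0 S i.
Let F' := restrict F keep.

Lemma restrict_indexK v : keep v -> v <= N ->
  restrict_index keep v < size S /\ sel (restrict_index keep v) = v.
Proof.
move=> kv vN.
have eS : S = [seq u <- iota 0 v | keep u] ++ v :: [seq u <- iota v.+1 (N - v) | keep u].
  rewrite /S /vertices (_ : (fsize F).+1 = v + (N - v).+1); last by rewrite /N; lia.
  by rewrite iotaD filter_cat add0n /= kv.
have sz : size [seq u <- iota 0 v | keep u] = restrict_index keep v by rewrite size_filter.
by rewrite /sel eS size_cat nth_cat /= sz ltnn subnn; split=> //; lia.
Qed.

Lemma selK i : i < size S -> [/\ keep (sel i), sel i <= N & restrict_index keep (sel i) = i].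
Proof.
move=> iS; have : sel i \in S by apply: mem_nth.
rewrite mem_filter mem_vertices => /andP[ks sN]; split=> //.
have [r1 r2] := restrict_indexK ks sN.
by apply/eqP; rewrite -(nth_uniq 0 r1 iS (filter_uniq _ (iota_uniq _ _))); apply/eqP.
Qed.

Lemma sel0 : sel 0 = 0.
Proof. by have [_] := restrict_indexK keep0 (leq0n N). Qed.

Lemma sel_pos i : 0 < i -> i < size S -> 0 < sel i.
Proof.
move=> i0 /selK[_ _ e]; rewrite lt0n; apply: contraTneq i0 => s0.
by rewrite -e s0.
Qed.

Lemma restrict_le i : (i <= fsize F') = (i < size S).
Proof.
have [S0 _] := restrict_indexK keep0 (leq0n N).
by rewrite /= -ltnS prednK.
Qed.

Lemma restrict_vertices : vertices F' = iota 0 (size S).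
Proof.
have [S0 _] := restrict_indexK keep0 (leq0n N).
by rewrite /vertices (_ : (fsize F').+1 = size S) //= prednK.
Qed.

Lemma restrict_lab i : flab F' i = flab F (sel i). Proof. by []. Qed.

Lemma restrict_par i : fpar F' i = restrict_index keep (fpar F (sel i)). Proof. by []. Qed.

Lemma restrict_sel_par i : 0 < i < size S -> sel (fpar F' i) = fpar F (sel i).
Proof.
move=> /andP[i0 iS]; have [ks sN _] := selK iS; have s0 := sel_pos i0 iS.
have kp : keep (fpar F (sel i)) by apply: keep_par; rewrite ?s0.
have pN : fpar F (sel i) <= N by rewrite ltnW // (leq_trans (par_lt _)) ?s0.
by have [_] := restrict_indexK kp pN; rewrite restrict_par.
Qed.

Lemma restrict_par_lt i : 0 < i <= fsize F' -> fpar F' i < i.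
Proof.
move=> /andP[i0]; rewrite restrict_le => iS.
have [ks sN e] := selK iS; have s0 := sel_pos i0 iS.
rewrite restrict_par -{2}e; apply: restrict_index_lt; first by apply: keep_par; rewrite ?s0.
by apply: par_lt; rewrite s0.
Qed.

Lemma restrict_rooted i : i <= fsize F' -> rooted_upto F' i.
Proof. by move=> iN u /andP[u0 ui]; apply: restrict_par_lt; rewrite u0 (leq_trans ui). Qed.

Lemma rootedF v : v <= N -> rooted_upto F v.
Proof. by move=> vN u /andP[u0 uv]; apply: par_lt; rewrite u0 (leq_trans uv). Qed.

Lemma keep_tine v u : v <= N -> keep v -> u \in tine F v -> keep u.
Proof.
elim/ltn_ind: v => v IHv vN kv; have [->|v0] := posnP v; first by rewrite inE => /eqP->.
have pv : fpar F v < v by apply: par_lt; rewrite v0.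
rewrite (mem_tineS _ v0 (rootedF vN)) => /orP[/eqP->//|up].
by apply: IHv up => //; [rewrite ltnW // (leq_trans pv) | apply: keep_par; rewrite ?v0].
Qed.

Lemma restrict_tine i : i < size S -> tine F' i = map (restrict_index keep) (tine F (sel i)).
Proof.
elim/ltn_ind: i => i IHi iS; have [ks sN e] := selK iS.
have [i0|i0] := posnP i; first by rewrite i0 sel0.
have s0 := sel_pos i0 iS.
rewrite (tineS i0 (restrict_rooted _)) ?restrict_le // (tineS s0 (rootedF sN)) map_cons e.
have pi : fpar F' i < i by apply: restrict_par_lt; rewrite i0 restrict_le.
by rewrite IHi ?restrict_sel_par ?i0 // (ltn_trans pi).
Qed.

Lemma restrict_depth i : i < size S -> depth F' i = depth F (sel i).
Proof. by move=> iS; rewrite /depth restrict_tine // size_map. Qed.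

Lemma restrict_mem_tine v u : v <= N -> keep v -> u <= N -> keep u ->
  (restrict_index keep u \in tine F' (restrict_index keep v)) = (u \in tine F v).
Proof.
move=> vN kv uN ku; have [vS sv] := restrict_indexK kv vN.
rewrite restrict_tine // sv; apply/mapP/idP => [[u' u'v e]|]; last by exists u.
by rewrite (restrict_index_inj ku (keep_tine vN kv u'v) e).
Qed.

Lemma restrict_tine_inv v i : v <= N -> keep v -> i \in tine F' (restrict_index keep v) ->
  exists2 u, u \in tine F v & i = restrict_index keep u.
Proof.
by move=> vN kv; have [vS sv] := restrict_indexK kv vN; rewrite restrict_tine // sv => /mapP.
Qed.

End Restrict.

Definition mu_honest_step (M R : int) : int :=
  if ((M < R)%R && (M == 0%R)) then 0%R else (M - 1)%R.

Lemma mu_honest_step_ge M R : (M - 1 <= mu_honest_step M R)%R.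
Proof. by rewrite /mu_honest_step; case: ifP => [/andP[_ /eqP->]|_]. Qed.

Lemma min_le_mu_honest_step (a b m r M R : int) : (0 <= a)%R -> (Order.min a b <= m)%R ->
  (m <= M)%R -> (b <= r)%R -> (r <= R)%R -> (Order.min 0%R (b - 1) <= mu_honest_step M R)%R.
Proof.
rewrite /mu_honest_step => a0 ab_m mM br rR.
by case: (ltrP M R) => MR; case: (eqVneq M 0%R) => [M0|/eqP M0] /=; lia.
Qed.

Section Prune.
Variables (w : charstring) (G : fork) (h : nat).
Hypotheses (cG : closed_fork (rcons w false) G) (hN : h <= fsize G)
  (lh : flab G h = (size w).+1).

Let n := size w.
Let w0 := rcons w false.
Let N := fsize G.
Let fG : is_fork w0 G := cG.1.

(* The vertices below an honest vertex other than [h]: pruning the others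
   removes [h] and the adversarial path that leads to it. *)
Definition keep_old : pred nat := fun v =>
  has (fun u => honest_vertex w0 G u && (u != h) && (v \in tine G u)) (vertices G).

Let Fr := restrict G keep_old.

Lemma keep_oldP v :
  reflect (exists u, [/\ u <= N, honest_vertex w0 G u, u != h & v \in tine G u]) (keep_old v).
Proof.
apply: (iffP hasP) => [[u]|[u [uN hu uh vu]]].
- by rewrite mem_vertices => uN /andP[/andP[hu uh] vu]; exists u.
- by exists u; rewrite ?mem_vertices // hu uh vu.
Qed.

Lemma new_vertex_pos : 0 < h.
Proof. by have [_ [l0 _ _ _ _]] := fG; rewrite lt0n; apply/eqP => h0; move: lh; rewrite h0 l0. Qed.

Lemma new_vertex_unique v : v <= N -> flab G v = n.+1 -> v = h.
Proof. by move=> vN lv; apply: (lab_honest_inj fG (honest_idx_rcons_last w false)). Qed.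

Lemma lab_le_new v : v <= N -> flab G v <= n.+1.
Proof. by move=> vN; rewrite -(size_rcons w false) (fork_lab_le fG). Qed.

Lemma keep_old0 : keep_old 0.
Proof. by apply/keep_oldP; exists 0; split=> //; rewrite eq_sym -lt0n new_vertex_pos. Qed.

Lemma keep_old_par v : 0 < v <= N -> keep_old v -> keep_old (fpar G v).
Proof.
move=> /andP[v0 vN] /keep_oldP[u [uN hu uh vu]]; apply/keep_oldP; exists u; split=> //.
exact: (tine_sub fG uN vu (mem_tine_par v0 (fork_rooted fG vN))).
Qed.

Lemma new_vertex_not_kept : ~~ keep_old h.
Proof.
apply/keep_oldP => -[u [uN hu uh /(lab_tine fG uN)]].
by rewrite eq_sym => /(_ uh); rewrite lh ltnNge lab_le_new.
Qed.

Lemma keep_old_lab v : v <= N -> keep_old v -> flab G v <= n.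
Proof.
move=> vN kv; rewrite -ltnS ltn_neqAle lab_le_new // andbT.
by apply: contraTneq kv => /(new_vertex_unique vN)->; apply: new_vertex_not_kept.
Qed.

Lemma depth_honest_lt_new u : u <= N -> honest_vertex w0 G u -> u != h ->
  depth G u < depth G h.
Proof.
have [_ [_ _ _ _ honest_depth]] := fG.
move=> uN /orP[/eqP->|hu] uh; first by rewrite (depthS new_vertex_pos (fork_rooted fG hN)).
apply: honest_depth => //; first by rewrite lh honest_idx_rcons_last.
rewrite lh ltn_neqAle lab_le_new // andbT.
by apply: contra uh => /eqP/(new_vertex_unique uN)/eqP.
Qed.

Lemma height_new_vertex : height G = depth G h.
Proof.
apply/eqP; rewrite eqn_leq depth_le_height // andbT.
apply/bigmax_leqP_seq => v; rewrite mem_vertices => vN _.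
have [u [uN leaf_u vu]] := leaf_above fG vN; have hu := cG.2 u uN leaf_u.
have [<-|uh] := eqVneq u h; first exact: depth_tine (fork_rooted fG uN) vu.
by rewrite (leq_trans (depth_tine (fork_rooted fG uN) vu)) // ltnW // depth_honest_lt_new.
Qed.

Lemma keep_old_depth v : v <= N -> keep_old v -> depth G v < depth G h.
Proof.
move=> vN /keep_oldP[u [uN hu uh vu]].
exact: leq_ltn_trans (depth_tine (fork_rooted fG uN) vu) (depth_honest_lt_new uN hu uh).
Qed.

Lemma unkept_adv p : p <= N -> ~~ keep_old p -> p != h -> 0 < p /\ adv_idx w0 (flab G p).
Proof.
move=> pN kp ph; have p0 : 0 < p by rewrite lt0n; apply: contraNneq kp => ->; apply: keep_old0.
have hp : ~~ honest_idx w0 (flab G p).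
  apply: contra kp => hp; apply/keep_oldP; exists p; split=> //.
  - by rewrite /honest_vertex hp orbT.
  - exact: mem_tine_self (fork_rooted fG pN).
split=> //; have := lab_pos fG (v := p); rewrite p0 pN => /(_ isT) lp.
by move: hp; rewrite /honest_idx /adv_idx lp (fork_lab_le fG pN) /=; case: nth.
Qed.

(* Walking down from an unkept vertex other than [h] only crosses adversarial
   vertices, which never lowers the reach. *)
Lemma kept_ancestor p : p <= N -> p != h ->
  exists t, [/\ keep_old t, t \in tine G p & (reach w0 G p <= reach w0 G t)%R].
Proof.
elim/ltn_ind: p => p IHp pN ph; case kp: (keep_old p).
  by exists p; split=> //; apply: mem_tine_self (fork_rooted fG pN).
have [p0 adv_p] := unkept_adv pN (negbT kp) ph.
have pp : fpar G p < p by apply: (fork_par_lt fG); rewrite p0.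
have ppN : fpar G p <= N by rewrite ltnW // (leq_trans pp).
have pph : fpar G p != h.
  have [_ [_ lab_par _ _ _]] := fG.
  apply: contraTneq (lab_par p (ltac:(by rewrite p0))) => ->.
  by rewrite lh -leqNgt lab_le_new.
have [t [kt tp rt]] := IHp _ pp ppN pph.
exists t; split=> //.
- exact: (tine_sub fG pN (mem_tine_par p0 (fork_rooted fG pN)) tp).
- by apply: le_trans rt; apply: (reach_adv_le_par fG); rewrite ?p0.
Qed.

Let par_ltG : forall v, 0 < v <= fsize G -> fpar G v < v := fork_par_lt fG.
Let S := [seq v <- vertices G | keep_old v].

Lemma prune_le i : (i <= fsize Fr) = (i < size S).
Proof. exact: (restrict_le G keep_old0 i). Qed.

Lemma prune_sel i : i <= fsize Fr ->
  [/\ keep_old (nth 0 S i), nth 0 S i <= N & restrict_index keep_old (nth 0 S i) = i].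
Proof. by rewrite prune_le => iS; apply: (selK keep_old0 iS). Qed.

Lemma prune_depth i : i <= fsize Fr -> depth Fr i = depth G (nth 0 S i).
Proof. by rewrite prune_le => iS; apply: (restrict_depth par_ltG keep_old0 keep_old_par iS). Qed.

Lemma prune_lab_le i : i <= fsize Fr -> flab Fr i <= n.
Proof. by move=> /prune_sel[ks sN _]; rewrite restrict_lab keep_old_lab. Qed.

Lemma prune_lab_par_lt i : 0 < i <= fsize Fr -> flab Fr (fpar Fr i) < flab Fr i.
Proof.
have [_ [_ lab_par _ _ _]] := fG.
move=> /andP[i0 iN]; have iS : i < size S by rewrite -prune_le.
rewrite !restrict_lab (restrict_sel_par par_ltG keep_old0 keep_old_par) ?i0 //.
have [_ sN _] := prune_sel iN.
by apply: lab_par; rewrite sN (sel_pos keep_old0 i0 iS).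
Qed.

Lemma prune_honest_once i : honest_idx w i ->
  count (fun j => flab Fr j == i) (vertices Fr) = 1.
Proof.
have [_ [_ _ _ honest_once _]] := fG.
move=> hi; have iw : i <= n by case/andP: (honest_idx_range hi).
have hi0 : honest_idx w0 i by rewrite /w0 honest_idx_rcons.
rewrite (restrict_vertices G keep_old0) -(count_map (nth 0 S) (fun v => flab G v == i)).
rewrite -/S (_ : [seq nth 0 S j | j <- iota 0 (size S)] = S); last exact: mkseq_nth.
rewrite count_filter -(honest_once i hi0); apply: eq_in_count => v; rewrite mem_vertices => vN /=.
have [lv|//] := eqVneq (flab G v) i; apply/keep_oldP; exists v; split=> //.
- by rewrite /honest_vertex lv hi0 orbT.
- by apply: contraTneq iw => vh; rewrite -lv vh lh -ltnNge.
- exact: mem_tine_self (fork_rooted fG vN).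
Qed.

Lemma prune_honest_depth i j : i <= fsize Fr -> j <= fsize Fr ->
  honest_idx w (flab Fr i) -> honest_idx w (flab Fr j) ->
  flab Fr i < flab Fr j -> depth Fr i < depth Fr j.
Proof.
have [_ [_ _ _ _ honest_depth]] := fG.
move=> iN jN; have [ki kiN _] := prune_sel iN; have [kj kjN _] := prune_sel jN.
rewrite !prune_depth // !restrict_lab => hi hj lij.
by apply: honest_depth; rewrite // /w0 honest_idx_rcons // keep_old_lab.
Qed.

Lemma prune_leaf_honest i : i <= fsize Fr -> is_leaf Fr i -> honest_vertex w Fr i.
Proof.
move=> iN leaf_i; have [ks sN e] := prune_sel iN.
have [u [uN hu uh su]] := keep_oldP _ ks.
have [si|ne] := eqVneq (nth 0 S i) u.
  move: hu; rewrite /honest_vertex -si restrict_lab => /orP[/eqP s0|hs].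
    by rewrite -e s0.
  by move: hs; rewrite /w0 honest_idx_rcons ?keep_old_lab // => ->; rewrite orbT.
have [c [cu c0 pc]] := tine_child (fork_rooted fG uN) su ne.
have cN : c <= N := tine_le_fsize fG uN cu.
have kc : keep_old c by apply/keep_oldP; exists u.
have [cS sc] := restrict_indexK keep_old0 kc cN.
move/hasP: leaf_i; case; exists (restrict_index keep_old c); first by rewrite mem_vertices prune_le.
by rewrite (restrict_index_lt keep_old0 c0) restrict_par sc pc e eqxx.
Qed.

Lemma prune_closed : closed_fork w Fr.
Proof.
have [_ [l0 _ _ _ _]] := fG.
split; last exact: prune_leaf_honest.
split; first exact: (restrict_par_lt par_ltG keep_old0 keep_old_par).
split; [ | exact: prune_lab_par_lt | exact: prune_lab_le | exact: prune_honest_once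
       | exact: prune_honest_depth].
by rewrite restrict_lab (sel0 G keep_old0) l0.
Qed.

Lemma height_prune_lt : height Fr < depth G h.
Proof.
rewrite (depthS new_vertex_pos (fork_rooted fG hN)) ltnS.
apply/bigmax_leqP_seq => i; rewrite mem_vertices => iN _.
have [ks sN _] := prune_sel iN.
by rewrite prune_depth // -ltnS -(depthS new_vertex_pos (fork_rooted fG hN)) keep_old_depth.
Qed.

Lemma keep_old_reach v : v <= N -> keep_old v ->
  restrict_index keep_old v <= fsize Fr /\
  (reach w0 G v <= reach w Fr (restrict_index keep_old v) - 1)%R.
Proof.
move=> vN kv; have [vS sv] := restrict_indexK keep_old0 kv vN.
have vN' : restrict_index keep_old v <= fsize Fr by rewrite prune_le.
split=> //; rewrite reach_rcons_false /reach /gap height_new_vertex.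
have -> : reserve w Fr (restrict_index keep_old v) = reserve w G v.
  by rewrite /reserve restrict_lab sv.
have := depth_le_height vN'; have := height_prune_lt; rewrite prune_depth // sv; lia.
Qed.

Lemma keep_old_disjoint k s1 s2 : s1 <= N -> s2 <= N -> keep_old s1 -> keep_old s2 ->
  disjoint_over k G s1 s2 ->
  disjoint_over k Fr (restrict_index keep_old s1) (restrict_index keep_old s2).
Proof.
move=> s1N s2N k1 k2 /disjoint_overP dis; apply/disjoint_overP => u' u1.
have [u us1 ->] := restrict_tine_inv par_ltG keep_old0 keep_old_par s1N k1 u1.
have uN : u <= N := tine_le_fsize fG s1N us1.
have ku : keep_old u := keep_tine par_ltG keep_old0 keep_old_par s1N k1 us1.
rewrite (restrict_mem_tine par_ltG keep_old0 keep_old_par s2N k2 uN ku) => us2 u0.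
have [_ su] := restrict_indexK keep_old0 ku uN.
by rewrite restrict_lab su dis //; apply: contraNneq u0 => ->.
Qed.

Lemma reach_new_vertex : reach w0 G h = 0%R.
Proof.
rewrite reach_rcons_false /reach /gap height_new_vertex subnn.
suff -> : reserve w G h = 0 by [].
rewrite /reserve lh; apply/eqP; rewrite -leqn0 leqNgt -has_count; apply/hasPn => i.
by rewrite mem_iota => /andP[_ iw]; apply/negP => /andP[_]; lia.
Qed.

(* The parent of [h] has reach at least [-1] since its gap is [1]. *)
Lemma kept_ancestor_new :
  exists t, [/\ t <= N, keep_old t, t \in tine G h &
                (0 <= reach w Fr (restrict_index keep_old t))%R].
Proof.
have rh := fork_rooted fG hN; set p := fpar G h.
have ph : p < h by apply: par_ltG; rewrite new_vertex_pos hN.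
have pN : p <= N by rewrite ltnW // (leq_trans ph).
have pin : p \in tine G h by apply: mem_tine_par new_vertex_pos rh.
have rp : (-1 <= reach w0 G p)%R.
  by rewrite /reach /gap height_new_vertex (depthS new_vertex_pos rh) -/p subSnn; lia.
have [t [kt tp rt]] := kept_ancestor pN (negbT (ltn_eqF ph)).
have tN : t <= N := tine_le_fsize fG pN tp.
exists t; split=> //; first exact: (tine_sub fG hN pin tp).
by have [_] := keep_old_reach tN kt; lia.
Qed.

Lemma reach_prune_bound R : (rho_fork w Fr <= R)%R ->
  forall v, v <= N -> (reach w0 G v <= 0)%R \/ (reach w0 G v <= R - 1)%R.
Proof.
move=> rho_R v vN; have [->|vh] := eqVneq v h; first by left; rewrite reach_new_vertex.
right; have [t [kt tv rt]] := kept_ancestor vN vh.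
have [tN' rt'] := keep_old_reach (tine_le_fsize fG vN tv) kt.
by have [reach_le _] := rho_fork_spec w Fr; have := reach_le _ tN'; lia.
Qed.

Lemma mu_pair_prune_bound_new k M R s : (mu_over k w Fr <= M)%R -> (rho_fork w Fr <= R)%R ->
  s <= N -> s != h -> disjoint_over k G h s ->
  (Order.min (reach w0 G h) (reach w0 G s) <= mu_honest_step M R)%R.
Proof.
move=> mu_M rho_R sN sh dis.
have [t2 [k2 t2s r2]] := kept_ancestor sN sh; have t2N := tine_le_fsize fG sN t2s.
have [t [tN kt th rt]] := kept_ancestor_new.
have dis' : disjoint_over k G t t2.
  by apply: disjoint_over_sub dis => x; [apply: (tine_sub fG hN th) | apply: (tine_sub fG sN t2s)].
have [t'N _] := keep_old_reach tN kt; have [t2'N rt2] := keep_old_reach t2N k2.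
have [mu_le _] := mu_over_spec k w Fr; have [reach_le _] := rho_fork_spec w Fr.
have := min_le_mu_honest_step rt (mu_le _ _ t'N t2'N (keep_old_disjoint tN t2N kt k2 dis'))
  mu_M (reach_le _ t2'N) rho_R.
by rewrite reach_new_vertex; lia.
Qed.

Lemma mu_pair_prune_bound k M R : k <= n -> (mu_over k w Fr <= M)%R -> (rho_fork w Fr <= R)%R ->
  forall s1 s2, s1 <= N -> s2 <= N -> disjoint_over k G s1 s2 ->
  (Order.min (reach w0 G s1) (reach w0 G s2) <= mu_honest_step M R)%R.
Proof.
move=> kn mu_M rho_R s1 s2 s1N s2N dis.
have [e1|s1h] := eqVneq s1 h; have [e2|s2h] := eqVneq s2 h.
- have hh := mem_tine_self (fork_rooted fG hN); move/disjoint_overP: dis.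
  by rewrite e1 e2 => /(_ h hh hh (lt0n_neq0 new_vertex_pos)); rewrite lh; lia.
- by rewrite e1 in dis *; apply: (mu_pair_prune_bound_new mu_M rho_R s2N s2h dis).
- rewrite e2 minC; apply: (mu_pair_prune_bound_new mu_M rho_R s1N s1h).
  by rewrite disjoint_over_sym -e2.
have [t1 [k1 t1s r1]] := kept_ancestor s1N s1h; have t1N := tine_le_fsize fG s1N t1s.
have [t2 [k2 t2s r2]] := kept_ancestor s2N s2h; have t2N := tine_le_fsize fG s2N t2s.
have dis' : disjoint_over k G t1 t2.
  apply: disjoint_over_sub dis => x.
  - exact: (tine_sub fG s1N t1s).
  - exact: (tine_sub fG s2N t2s).
have [t1'N rt1] := keep_old_reach t1N k1; have [t2'N rt2] := keep_old_reach t2N k2.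
have [mu_le _] := mu_over_spec k w Fr.
have := mu_le _ _ t1'N t2'N (keep_old_disjoint t1N t2N k1 k2 dis').
by have := mu_honest_step_ge M R; lia.
Qed.

End Prune.

Lemma new_honest_vertex w G : closed_fork (rcons w false) G ->
  exists2 h, h <= fsize G & flab G h = (size w).+1.
Proof.
case=> [[_ [_ _ _ honest_once _]] _].
have /hasP[h] : has (fun v => flab G v == (size w).+1) (vertices G).
  by rewrite has_count honest_once ?honest_idx_rcons_last.
by rewrite mem_vertices => hN /eqP; exists h.
Qed.

Lemma rho_fork_rcons_false_le w G R : closed_fork (rcons w false) G ->
  (forall F, closed_fork w F -> (rho_fork w F <= R)%R) ->
  (rho_fork (rcons w false) G <= 0)%R \/ (rho_fork (rcons w false) G <= R - 1)%R.
Proof.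
move=> cG rho_R; have [h hN lh] := new_honest_vertex cG.
have [_ [v vN ->]] := rho_fork_spec (rcons w false) G.
exact: (reach_prune_bound cG hN lh (rho_R _ (prune_closed cG hN lh)) vN).
Qed.

Lemma mu_over_rcons_false_le w G k M R : closed_fork (rcons w false) G -> k <= size w ->
  (forall F, closed_fork w F -> (mu_over k w F <= M)%R) ->
  (forall F, closed_fork w F -> (rho_fork w F <= R)%R) ->
  (mu_over k (rcons w false) G <= mu_honest_step M R)%R.
Proof.
move=> cG kn mu_M rho_R; have [h hN lh] := new_honest_vertex cG.
have cFr := prune_closed cG hN lh.
have [_ [s1 [s2 [s1N s2N dis ->]]]] := mu_over_spec k (rcons w false) G.
exact: (mu_pair_prune_bound cG hN lh kn (mu_M _ cFr) (rho_R _ cFr) s1N s2N dis).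
Qed.

Definition trivial_fork := Fork 0 (fun _ => 0) (fun _ => 0).

Lemma trivial_fork_closed : closed_fork [::] trivial_fork.
Proof.
split; last by move=> v; rewrite leqn0 => /eqP->.
split; first by case=> [|[]].
by split=> //; [case=> [|[]] | move=> i /andP[/andP[i0 /= i1] _]; lia].
Qed.

Lemma deepest_tine w F :
  exists t, [/\ t <= fsize F, depth F t = height F & (0 <= reach w F t)%R].
Proof.
by have [t tN e] := height_attained F; exists t; rewrite /reach /gap e subnn.
Qed.

Lemma closed_fork_exists w : exists F, closed_fork w F.
Proof.
elim/last_ind: w => [|w [] [F cF]]; first by exists trivial_fork; apply: trivial_fork_closed.
  by exists F; apply/closed_fork_rcons_true.
have [t [tN _ rt]] := deepest_tine w F.
by have [G [cG _ _ _ _]] := honest_extension_exists cF tN rt; exists G.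
Qed.

Lemma mu_over_rho k w F : is_fork w F -> size w <= k -> mu_over k w F = rho_fork w F.
Proof.
move=> fF kw; have [reach_le [v vN rho_v]] := rho_fork_spec w F.
apply: imax_eq.
- exists v, v; split; rewrite ?rho_v ?minxx //; apply/disjoint_overP => u uv _ _.
  by rewrite (leq_trans _ kw) // (fork_lab_le fF) // (tine_le_fsize fF vN uv).
- by move=> s [v1 [v2 [v1N v2N _ ->]]]; rewrite ge_min reach_le.
Qed.

Lemma mu_fork_rcons x y b G : mu_fork x (rcons y b) G = mu_over (size x) (rcons (x ++ y) b) G.
Proof. by rewrite mu_forkE rcons_cat. Qed.

Definition jointly_optimal (x y : charstring) := exists2 F, closed_fork (x ++ y) F &
  rho_fork (x ++ y) F = rho (x ++ y) /\ mu_fork x y F = mu x y.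

Lemma mu_rcons_true x y : jointly_optimal x y ->
  mu x (rcons y true) = (mu x y + 1)%R /\ jointly_optimal x (rcons y true).
Proof.
move=> [F cF [rho_F mu_F]].
have shift G : closed_fork (x ++ y) G -> forall v, v <= fsize G ->
    reach (rcons (x ++ y) true) G v = (reach (x ++ y) G v + 1)%R.
  by move=> cG v; apply: reach_rcons_true cG.1.
have [rho_le _] := rho_spec cF; have [mu_le _] := mu_spec cF.
have rho_next : rho (x ++ rcons y true) = rho_fork (x ++ rcons y true) F.
  rewrite -rcons_cat; apply: imax_eq; first by exists F => //; apply/closed_fork_rcons_true.
  move=> s [G /closed_fork_rcons_true cG ->].
  by rewrite !(rho_fork_shift (shift _ _)) // lerD2r rho_F rho_le.
have mu_next : mu x (rcons y true) = mu_fork x (rcons y true) F.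
  apply: imax_eq; first by exists F; rewrite // -rcons_cat; apply/closed_fork_rcons_true.
  move=> s [G]; rewrite -rcons_cat => /closed_fork_rcons_true cG ->.
  by rewrite !mu_fork_rcons !(mu_over_shift _ (shift _ _)) // lerD2r -!mu_forkE mu_F mu_le.
split; first by rewrite mu_next mu_fork_rcons (mu_over_shift _ (shift _ cF)) -mu_forkE mu_F.
exists F; last by rewrite -rho_next mu_next.
by rewrite -rcons_cat; apply/closed_fork_rcons_true.
Qed.

Lemma honest_extension_bounds w F t k : closed_fork w F -> t <= fsize F ->
  (0 <= reach w F t)%R ->
  exists G, [/\ closed_fork (rcons w false) G, (0 <= rho_fork (rcons w false) G)%R,
   (rho_fork w F - 1 <= rho_fork (rcons w false) G)%R,
   (mu_over k w F - 1 <= mu_over k (rcons w false) G)%R &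
   forall s, s <= fsize F -> disjoint_over k F t s -> (1 <= reach w F s)%R ->
     (0 <= mu_over k (rcons w false) G)%R].
Proof.
move=> cF tN rt.
have [G [cG FG reach_old dis_old [h [hN reach_h dis_h]]]] :=
  honest_extension_exists cF tN rt.
have [reach_le _] := rho_fork_spec (rcons w false) G.
have [min_le _] := mu_over_spec k (rcons w false) G.
exists G; split=> //.
- by rewrite -reach_h reach_le.
- have [_ [v vN ->]] := rho_fork_spec w F.
  by rewrite -reach_old // reach_le // (leq_trans vN).
- have [_ [s1 [s2 [s1N s2N dis ->]]]] := mu_over_spec k w F.
  have := min_le s1 s2 (leq_trans s1N FG) (leq_trans s2N FG) (dis_old k s1 s2 s1N s2N dis).
  by rewrite !reach_old //; lia.
- move=> s sN dis rs; have := min_le h s hN (leq_trans sN FG) (dis_h k s sN dis).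
  by rewrite reach_h reach_old //; lia.
Qed.

(* If mu = 0 < rho, graft below the member of an optimal mu-pair that is
   disjoint from a rho-optimal tine (one of them is, by disjoint_over_split). *)
Lemma mu_rcons_false_witness x y F : closed_fork (x ++ y) F ->
  rho_fork (x ++ y) F = rho (x ++ y) -> mu_fork x y F = mu x y ->
  exists G, [/\ closed_fork (rcons (x ++ y) false) G,
     (0 <= rho_fork (rcons (x ++ y) false) G)%R,
     (rho (x ++ y) - 1 <= rho_fork (rcons (x ++ y) false) G)%R &
     (mu_honest_step (mu x y) (rho (x ++ y)) <= mu_over (size x) (rcons (x ++ y) false) G)%R].
Proof.
rewrite mu_forkE => cF rho_F mu_F.
have [_ [s1 [s2 [s1N s2N dis mu_s]]]] := mu_over_spec (size x) (x ++ y) F.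
have [_ [v vN rho_v]] := rho_fork_spec (x ++ y) F.
rewrite /mu_honest_step; case: ifPn => [/andP[lt_mu_rho /eqP mu0]|_].
  have rv : (1 <= reach (x ++ y) F v)%R by rewrite -rho_v rho_F; lia.
  have [dv|dv] := disjoint_over_split cF.1 vN s1N s2N dis.
  - have rs : (0 <= reach (x ++ y) F s1)%R by move: mu_s; rewrite mu_F mu0; lia.
    have [G [cG r0 r1 _ m1]] := honest_extension_bounds (size x) cF s1N rs.
    by exists G; rewrite -rho_F (m1 v) // disjoint_over_sym.
  - have rs : (0 <= reach (x ++ y) F s2)%R by move: mu_s; rewrite mu_F mu0; lia.
    have [G [cG r0 r1 _ m1]] := honest_extension_bounds (size x) cF s2N rs.
    by exists G; rewrite -rho_F (m1 v) // disjoint_over_sym.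
have [t [tN _ rt]] := deepest_tine (x ++ y) F.
have [G [cG r0 r1 m1 _]] := honest_extension_bounds (size x) cF tN rt.
by exists G; rewrite -rho_F -mu_F.
Qed.

Lemma mu_rcons_false x y : jointly_optimal x y ->
  mu x (rcons y false) = mu_honest_step (mu x y) (rho (x ++ y)) /\
  jointly_optimal x (rcons y false).
Proof.
move=> [F cF [rho_F mu_F]].
have [rho_le _] := rho_spec cF; have [mu_le _] := mu_spec cF.
have xw : size x <= size (x ++ y) by rewrite size_cat leq_addr.
have mu_le' G : closed_fork (x ++ y) G -> (mu_over (size x) (x ++ y) G <= mu x y)%R.
  by rewrite -mu_forkE; apply: mu_le.
have [G [cG r0 r1 mG]] := mu_rcons_false_witness cF rho_F mu_F.
have mu_next : mu x (rcons y false) = mu_fork x (rcons y false) G.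
  apply: imax_eq; first by exists G; rewrite // -rcons_cat.
  move=> s [G']; rewrite -rcons_cat => cG' ->; rewrite !mu_fork_rcons.
  by apply: le_trans mG; apply: mu_over_rcons_false_le.
have rho_next : rho (x ++ rcons y false) = rho_fork (x ++ rcons y false) G.
  rewrite -rcons_cat; apply: imax_eq; first by exists G.
  by move=> s [G' cG' ->]; have := rho_fork_rcons_false_le cG' rho_le; lia.
split.
  apply/eqP; rewrite mu_next mu_fork_rcons eq_le mG andbT.
  exact: mu_over_rcons_false_le.
by exists G; rewrite -?rho_next ?mu_next // -rcons_cat.
Qed.

Theorem lemma3 (x : charstring) :
  mu x [::] = rho x /\
  (forall y : charstring, x ++ y != [::] ->
     [/\ mu x (rcons y true) = (mu x y + 1)%R,
         mu x (rcons y false) =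
           (if ((mu x y < rho (x ++ y))%R && (mu x y == 0%R)) then 0%R
            else (mu x y - 1)%R)
       & exists2 F, closed_fork (x ++ y) F &
           rho_fork (x ++ y) F = rho (x ++ y) /\ mu_fork x y F = mu x y]).
Proof.
have [F0 cF0] := closed_fork_exists x.
have [rho_le [F cF rho_F]] := rho_spec cF0.
have mu_rho G : closed_fork (x ++ [::]) G -> mu_fork x [::] G = rho_fork x G.
  by rewrite cats0 => cG; rewrite mu_forkE cats0 (mu_over_rho cG.1).
have mu_nil : mu x [::] = rho x.
  apply: imax_eq; first by exists F; rewrite ?cats0 // mu_rho ?cats0.
  by move=> s [G cG ->]; rewrite mu_rho // rho_le // -(cats0 x).
have optimal y : jointly_optimal x y.
  elim/last_ind: y => [|y [] IHy].
  - by exists F; rewrite ?cats0 // mu_rho ?cats0 // mu_nil.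
  - exact: (mu_rcons_true IHy).2.
  - exact: (mu_rcons_false IHy).2.
(* The recurrences hold for every y. *)
split=> // y _; split; [exact: (mu_rcons_true (optimal y)).1
                        | exact: (mu_rcons_false (optimal y)).1 | exact: optimal].
Qed.
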